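(* Fix $K>0$, $t>0$, $\rho,\kappa_0,\theta\in\mathbb R$, and let $h(x)=\max\{e^x-K,0\}$. For $\tau>0$ and a function $f(x,\sigma)$ set $(e^{\tau L_0}f)(x,\sigma)=\int_{\mathbb R}\phi_\tau(x-y,\sigma)f(y,\sigma)\,dy$, where $$\phi_\tau(x,\sigma)=\frac{1}{\sigma\sqrt{2\pi\tau}}\exp\Big(-\tfrac12\Big(\tfrac{x}{\sigma\sqrt\tau}-\tfrac{\sigma\sqrt\tau}{2}\Big)^2\Big),$$ and $e^{0L_0}=\mathrm{id}$. With $L_1=\rho\sigma^2\partial_x\partial_\sigma+\kappa_0(\theta-\sigma)\partial_\sigma$ and $L_2=\frac12\sigma^2\partial_\sigma^2$, define $$F_1=\int_0^t e^{(t-\tau)L_0}L_1e^{\tau L_0}h\,d\tau,$$ $$F_2=\int_0^t e^{(t-\tau_1)L_0}L_2e^{\tau_1L_0}h\,d\tau_1+\int_0^t\!\!\int_0^{\tau_1}e^{(t-\tau_1)L_0}L_1e^{(\tau_1-\tau_2)L_0}L_1e^{\tau_2L_0}h\,d\tau_2\,d\tau_1,$$ as functions of $(x,\sigma)\in\mathbb R\times(0,\infty)$. Let $d_-=\frac{x-\ln K}{\sigma\sqrt t}-\frac{\sigma\sqrt t}{2}$, $N'(z)=(2\pi)^{-1/2}e^{-z^2/2}$, and let $H_n$ be the probabilists' Hermite polynomials $H_n(z)=(-1)^ne^{z^2/2}\partial_z^ne^{-z^2/2}$. Then $$F_1=\frac{Kt}{2}\big(\kappa_0(\theta-\sigma)\sqrt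 t-\rho\sigma d_-\big)N'(d_-),$$ and $$F_2=K\sum_{i=0}^4 a_{2i}\Big(-\frac{1}{\sigma\sqrt t}\Big)^iH_i(d_-)\,\frac{N'(d_-)}{\sigma\sqrt t},$$ where $a_{20}=\frac{t^2\sigma^2}{4}+\frac{t^3\kappa_0^2}{6}(\theta-\sigma)(\theta-2\sigma)$, $a_{21}=-\frac{t^3\sigma^4}{6}+\frac{t^3\kappa_0\rho\sigma^2}{6}(4\theta-5\sigma)-\frac{t^4\kappa_0^2\sigma^2}{8}(\theta-\sigma)^2$, $a_{22}=\frac{t^3\sigma^4}{6}+\frac{t^3\rho^2\sigma^4}{2}+\frac{t^4\kappa_0^2\sigma^2}{8}(\theta-\sigma)^2-\frac{t^4\kappa_0\rho\sigma^4}{4}(\theta-\sigma)$, $a_{23}=\frac{t^4\kappa_0\rho\sigma^4}{4}(\theta-\sigma)-\frac{t^4\rho^2\sigma^6}{8}$, $a_{24}=\frac{t^4\rho^2\sigma^6}{8}$.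
   Context: These are the coefficients of $\nu$ and $\nu^2$ in the Duhamel–Dyson expansion of the solution of the $\lambda$SABR equation $\partial_t u=\sigma^2[\frac12(\partial_x^2u-\partial_xu)+\nu\rho\partial_x\partial_\sigma u+\frac12\nu^2\partial_\sigma^2u]+\nu\kappa_0(\theta-\sigma)\partial_\sigma u$, $u(0)=h$, whose generator is $L_0+\nu L_1+\nu^2L_2$ with $L_0=\frac12\sigma^2(\partial_x^2-\partial_x)$; the operator $e^{\tau L_0}$ is the heat semigroup of $L_0$ (convolution in $x$ with $\sigma$ as parameter). *)

From Stdlib Require Import Reals Lra ClassicalEpsilon.
Open Scope R_scope.

Definition improper_integral (g : R -> R) (l : R) : Prop :=
  forall eps, 0 < eps -> exists M, forall a b, a <= - M -> M <= b ->
    exists pr : Riemann_integrable g a b, Rabs (RiemannInt pr - l) < eps.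

Definition int_R (g : R -> R) : R :=
  epsilon (inhabits 0) (improper_integral g).

Definition int_ab (g : R -> R) (a b : R) : R :=
  epsilon (inhabits 0)
    (fun v => exists pr : Riemann_integrable g a b, RiemannInt pr = v).

Definition deriv1 (f : R -> R) (z : R) : R :=
  epsilon (inhabits 0) (derivable_pt_lim f z).

Definition Dx (f : R -> R -> R) (x s : R) : R := deriv1 (fun y => f y s) x.
Definition Ds (f : R -> R -> R) (x s : R) : R := deriv1 (fun u => f x u) s.

Definition phi (tau x s : R) : R :=
  / (s * sqrt (2 * PI * tau)) *
  exp (- / 2 * (x / (s * sqrt tau) - s * sqrt tau / 2) ^ 2).

Definition heat (tau : R) (f : R -> R -> R) (x s : R) : R :=
  if Rle_dec tau 0 then f x s
  else int_R (fun y => phi tau (x - y) s * f y s).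

Definition L1 (rho k0 theta : R) (f : R -> R -> R) (x s : R) : R :=
  rho * s ^ 2 * Dx (Ds f) x s + k0 * (theta - s) * Ds f x s.

Definition L2 (f : R -> R -> R) (x s : R) : R :=
  / 2 * s ^ 2 * Ds (Ds f) x s.

Definition payoff (K : R) (x s : R) : R := Rmax (exp x - K) 0.

Definition F1 (rho k0 theta t K : R) (x s : R) : R :=
  int_ab (fun tau => heat (t - tau) (L1 rho k0 theta (heat tau (payoff K))) x s) 0 t.

Definition F2 (rho k0 theta t K : R) (x s : R) : R :=
  int_ab (fun t1 => heat (t - t1) (L2 (heat t1 (payoff K))) x s) 0 t
  + int_ab (fun t1 =>
      int_ab (fun t2 =>
        heat (t - t1)
          (L1 rho k0 theta (heat (t1 - t2) (L1 rho k0 theta (heat t2 (payoff K)))))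
          x s) 0 t1) 0 t.

Fixpoint nderiv (n : nat) (f : R -> R) : R -> R :=
  match n with
  | O => f
  | S m => fun z => deriv1 (nderiv m f) z
  end.

Definition Hermite (n : nat) (z : R) : R :=
  (-1) ^ n * exp (z ^ 2 / 2) * nderiv n (fun w => exp (- (w ^ 2) / 2)) z.

Definition Nprime (z : R) : R := / sqrt (2 * PI) * exp (- (z ^ 2) / 2).

Definition d_minus (K t x s : R) : R :=
  (x - ln K) / (s * sqrt t) - s * sqrt t / 2.

Definition a2 (rho k0 theta t s : R) (i : nat) : R :=
  match i with
  | 0%nat => t ^ 2 * s ^ 2 / 4 + t ^ 3 * k0 ^ 2 / 6 * (theta - s) * (theta - 2 * s)
  | 1%nat => - (t ^ 3 * s ^ 4 / 6) + t ^ 3 * k0 * rho * s ^ 2 / 6 * (4 * theta - 5 * s)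
             - t ^ 4 * k0 ^ 2 * s ^ 2 / 8 * (theta - s) ^ 2
  | 2%nat => t ^ 3 * s ^ 4 / 6 + t ^ 3 * rho ^ 2 * s ^ 4 / 2
             + t ^ 4 * k0 ^ 2 * s ^ 2 / 8 * (theta - s) ^ 2
             - t ^ 4 * k0 * rho * s ^ 4 / 4 * (theta - s)
  | 3%nat => t ^ 4 * k0 * rho * s ^ 4 / 4 * (theta - s) - t ^ 4 * rho ^ 2 * s ^ 6 / 8
  | 4%nat => t ^ 4 * rho ^ 2 * s ^ 6 / 8
  | _ => 0
  end.

(* For sigma fixed, [e^(tau L0)] is convolution in [x] with the density of N(sigma^2 tau/2, sigma^2 tau),
   so [e^(tau L0) h] is the Black-Scholes price, whose sigma-derivative (the vega) is
   [K sigma tau phi_tau (x - ln K)].  From then on every term has the shape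
   [phi_tau (x - ln K) * P (x - ln K)] with [P] a polynomial of degree at most 4: [L1] and [L2] only
   differentiate the Gaussian, and completing the square gives
   [e^(a L0) (phi_b P) = phi_(a+b) * E [P (mu + sqrt V Z)]], which needs the normal moments up to
   order 4 (and [int e^(-u^2/2) = sqrt (2 PI)]).  The Duhamel integrands are then polynomials in the
   time variables, and the Hermite polynomials come from [H_(n+1) = z H_n - H_n']. *)

From Pilot Require Import Defs.
From Stdlib Require Import Reals Lra Lia ClassicalEpsilon FunctionalExtensionality.
From Coquelicot Require Import Coquelicot.
Open Scope R_scope.

(* Coquelicot states equalities in its own structures; [R_eq] restores [@eq R] for [ring]/[field]. *)
Ltac R_eq := match goal with |- ?a = ?b => change (@eq R a b) end.

(* Replace the variable [t] by [q * q] with [q := sqrt t], so that [field] sees the relation. *)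
Ltac elim_sqrt t :=
  let q := fresh "q" in
  let Hq := fresh "Hq" in
  assert (Hq : sqrt t * sqrt t = t) by (apply sqrt_sqrt; lra);
  set (q := sqrt t) in *; clearbody q; subst t.

Lemma deriv1_is f z l : is_derive f z l -> deriv1 f z = l.
Proof.
  intros H. apply is_derive_Reals in H. unfold deriv1.
  eapply uniqueness_limite; [apply epsilon_spec; exists l |]; eauto.
Qed.

Lemma int_ab_is_RInt f a b v : is_RInt f a b v -> int_ab f a b = v.
Proof.
  intros H. unfold int_ab.
  assert (Hex : ex_RInt f a b) by (exists v; exact H).
  destruct (epsilon_spec (inhabits 0)
    (fun v => exists pr : Riemann_integrable f a b, RiemannInt pr = v))
    as [pr <-].
  { exists (RiemannInt (ex_RInt_Reals_0 _ _ _ Hex)). eexists; reflexivity. }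
  rewrite <- RInt_Reals. apply is_RInt_unique, H.
Qed.

Lemma int_ab_eq_on_open f g a b v : a <= b ->
  (forall x, a < x < b -> f x = g x) -> is_RInt g a b v -> int_ab f a b = v.
Proof.
  intros Hab H Hg. apply int_ab_is_RInt, is_RInt_ext with g; [|exact Hg].
  intros x Hx. rewrite Rmin_left, Rmax_right in Hx by lra. symmetry; apply H, Hx.
Qed.

Lemma improper_integral_unique g l1 l2 :
  improper_integral g l1 -> improper_integral g l2 -> l1 = l2.
Proof.
  assert (Hlt : forall l l', improper_integral g l -> improper_integral g l' -> ~ l < l').
  { intros l l' H H' Hl.
    destruct (H ((l' - l) / 2)) as [M HM]; [lra|].
    destruct (H' ((l' - l) / 2)) as [M' HM']; [lra|].
    set (N := Rmax (Rabs M) (Rabs M')).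
    assert (M <= N) by (eapply Rle_trans; [apply Rle_abs | apply Rmax_l]).
    assert (M' <= N) by (eapply Rle_trans; [apply Rle_abs | apply Rmax_r]).
    destruct (HM (- N) N) as [pr Hpr]; try lra.
    destruct (HM' (- N) N) as [pr' Hpr']; try lra.
    rewrite (RiemannInt_P5 pr' pr) in Hpr'.
    apply Rabs_def2 in Hpr; apply Rabs_def2 in Hpr'; lra. }
  intros H1 H2.
  destruct (Rtotal_order l1 l2) as [Hl | [Hl | Hl]]; [exfalso | exact Hl | exfalso].
  - exact (Hlt _ _ H1 H2 Hl).
  - exact (Hlt _ _ H2 H1 Hl).
Qed.

Lemma int_R_eq g l : improper_integral g l -> int_R g = l.
Proof.
  intros H. apply (improper_integral_unique g); [|exact H].
  unfold int_R. apply epsilon_spec. exists l; exact H.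
Qed.

Lemma improper_integral_of_is_RInt f l :
  (forall eps, 0 < eps -> exists M, forall a b, a <= - M -> M <= b ->
     exists v, is_RInt f a b v /\ Rabs (v - l) < eps) ->
  improper_integral f l.
Proof.
  intros H eps He. destruct (H eps He) as [M HM]. exists M. intros a b Ha Hb.
  destruct (HM a b Ha Hb) as [v [Hv Hl]].
  assert (Hex : ex_RInt f a b) by (exists v; exact Hv).
  exists (ex_RInt_Reals_0 _ _ _ Hex). rewrite <- RInt_Reals, (is_RInt_unique _ _ _ _ Hv).
  exact Hl.
Qed.

Lemma is_lim_p_infty_near F L eps : is_lim F p_infty (Finite L) -> 0 < eps ->
  exists M, forall y, M <= y -> Rabs (F y - L) < eps.
Proof.
  intros H He. apply is_lim_spec in H.
  destruct (H (mkposreal eps He)) as [M HM]. exists (M + 1). intros y Hy. apply HM. lra.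
Qed.

Lemma is_lim_m_infty_near F L eps : is_lim F m_infty (Finite L) -> 0 < eps ->
  exists M, forall y, y <= - M -> Rabs (F y - L) < eps.
Proof.
  intros H He. apply is_lim_spec in H.
  destruct (H (mkposreal eps He)) as [M HM]. exists (- M + 1). intros y Hy. apply HM. lra.
Qed.

Lemma improper_integral_antiderivative f F L1 L2 :
  (forall y, is_derive F y (f y)) -> (forall y, continuous f y) ->
  is_lim F m_infty (Finite L1) -> is_lim F p_infty (Finite L2) ->
  improper_integral f (L2 - L1).
Proof.
  intros HD HC H1 H2. apply improper_integral_of_is_RInt. intros eps He.
  destruct (is_lim_m_infty_near _ _ (eps / 2) H1) as [M1 HM1]; [lra|].
  destruct (is_lim_p_infty_near _ _ (eps / 2) H2) as [M2 HM2]; [lra|].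
  set (M := Rmax (Rmax M1 M2) 0).
  assert (Rmax M1 M2 <= M /\ 0 <= M) as [] by (split; [apply Rmax_l | apply Rmax_r]).
  pose proof (Rmax_l M1 M2). pose proof (Rmax_r M1 M2).
  exists M. intros a b Ha Hb. exists (F b - F a). split.
  - apply (is_RInt_derive F f); intros; [apply HD | apply HC].
  - specialize (HM1 a ltac:(lra)). specialize (HM2 b ltac:(lra)).
    apply Rabs_def2 in HM1; apply Rabs_def2 in HM2. apply Rabs_def1; lra.
Qed.

Lemma improper_integral_scal f l k :
  improper_integral f l -> improper_integral (fun y => k * f y) (k * l).
Proof.
  intros H. apply improper_integral_of_is_RInt. intros eps He.
  pose proof (Rabs_pos k).
  destruct (H (eps / (Rabs k + 1))) as [M HM]; [apply Rdiv_lt_0_compat; lra|].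
  exists M. intros a b Ha Hb. destruct (HM a b Ha Hb) as [pr Hpr].
  exists (k * RiemannInt pr). split.
  - rewrite <- RInt_Reals. apply (is_RInt_scal (V := R_NormedModule)), (RInt_correct (V := R_CompleteNormedModule)).
    apply ex_RInt_Reals_1, pr.
  - rewrite <- Rmult_minus_distr_l, Rabs_mult.
    apply Rlt_le_trans with ((Rabs k + 1) * (eps / (Rabs k + 1))); [|right; field; lra].
    pose proof (Rabs_pos (RiemannInt pr - l)). nra.
Qed.

Lemma int_R_antiderivative_halfline f G p L :
  (forall y, y <= p -> f y = 0) ->
  (forall y, p <= y -> is_derive G y (f y)) -> (forall y, continuous f y) ->
  is_lim G p_infty (Finite L) ->
  int_R f = L - G p.
Proof.
  intros H0 HD HC HL. apply int_R_eq, improper_integral_of_is_RInt. intros eps He.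
  destruct (is_lim_p_infty_near _ _ eps HL) as [M HM]; [lra|].
  set (N := Rmax (Rmax (Rabs p) M) 0).
  pose proof (Rmax_l (Rmax (Rabs p) M) 0). pose proof (Rmax_r (Rabs p) M).
  pose proof (Rmax_l (Rabs p) M). pose proof (Rle_abs p). pose proof (Rle_abs (- p)).
  rewrite Rabs_Ropp in *.
  exists N. intros a b Ha Hb. unfold N in *. exists (G b - G p). split.
  - replace (G b - G p) with (plus (scal (p - a) 0) (minus (G b) (G p))).
    2: { change ((p - a) * 0 + (G b + - G p) = G b - G p). ring. }
    apply (is_RInt_Chasles f a p b).
    + apply is_RInt_ext with (fun _ => 0); [|apply (is_RInt_const (V := R_NormedModule))].
      intros y Hy. rewrite Rmin_left, Rmax_right in Hy by lra. symmetry; apply H0; lra.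
    + apply (is_RInt_derive G f); intros y Hy; [|apply HC].
      rewrite Rmin_left in Hy by lra. apply HD; lra.
  - replace (G b - G p - (L - G p)) with (G b - L) by ring. apply HM; lra.
Qed.

Lemma exp_le_exp_of_le a b : a <= b -> exp a <= exp b.
Proof. intros [H | ->]; [left; apply exp_increasing, H | right; reflexivity]. Qed.

Lemma pow_le_exp u n : 0 <= u -> (u / INR (S n)) ^ S n <= exp u.
Proof.
  intros Hu. pose proof (lt_0_INR (S n) (Nat.lt_0_succ n)) as Hn.
  assert (Hexp : forall k, exp (INR k * (u / INR (S n))) = exp (u / INR (S n)) ^ k).
  { induction k as [|k IH]; [simpl; rewrite Rmult_0_l; apply exp_0|].
    rewrite S_INR, Rmult_plus_distr_r, Rmult_1_l, exp_plus, IH. simpl. ring. }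
  replace u with (INR (S n) * (u / INR (S n))) at 2 by (field; lra).
  rewrite Hexp. apply pow_incr. split; [apply Rdiv_le_0_compat; lra|].
  pose proof (exp_ineq1_le (u / INR (S n))); lra.
Qed.

(* From [exp u >= (u/n)^n] with [u = w^2/(2V)] and [n = j + 1]. *)
Lemma gauss_tail_bound j V w : 0 < V -> 1 <= Rabs w ->
  Rabs (w ^ j * exp (- (w ^ 2) / (2 * V))) <= (2 * V * INR (S j)) ^ S j / Rabs w.
Proof.
  intros HV Hw.
  set (n := S j). set (u := w ^ 2 / (2 * V)).
  assert (Hw2 : w ^ 2 = Rabs w ^ 2) by (rewrite pow2_abs; reflexivity).
  assert (Hu : 0 < u) by (unfold u; rewrite Hw2; apply Rdiv_lt_0_compat; [apply pow_lt|]; lra).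
  assert (HnR : 0 < INR n) by (apply lt_0_INR; unfold n; lia).
  pose proof (pow_le_exp u j (Rlt_le _ _ Hu)) as He. fold n in He.
  assert (Hpos : 0 < (u / INR n) ^ n) by (apply pow_lt, Rdiv_lt_0_compat; lra).
  rewrite Rabs_mult, (Rabs_right (exp _)) by (left; apply exp_pos).
  replace (- w ^ 2 / (2 * V)) with (- u) by (unfold u; field; lra).
  rewrite exp_Ropp, <- RPow_abs.
  apply Rle_trans with (Rabs w ^ j * / (u / INR n) ^ n).
  { apply Rmult_le_compat_l; [apply pow_le; lra | apply Rinv_le_contravar; lra]. }
  replace (Rabs w ^ j * / (u / INR n) ^ n)
    with ((2 * V * INR n) ^ n / Rabs w ^ S (S j)).
  2: { replace (u / INR n) with (Rabs w ^ 2 * / (2 * V * INR n)) by (unfold u; rewrite Hw2; field; lra).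
       rewrite (Rpow_mult_distr (Rabs w ^ 2)), <- pow_mult, pow_inv.
       replace (2 * n)%nat with (S (S j) + j)%nat by (unfold n; lia).
       rewrite pow_add.
       assert (Rabs w ^ j <> 0) by (apply pow_nonzero; lra).
       assert ((2 * V * INR n) ^ n <> 0) by (apply pow_nonzero; apply Rgt_not_eq, Rmult_lt_0_compat; lra).
       assert (Rabs w ^ S (S j) <> 0) by (apply pow_nonzero; lra).
       field. repeat split; assumption. }
  unfold Rdiv. apply Rmult_le_compat_l; [apply pow_le; apply Rmult_le_pos; lra|].
  apply Rinv_le_contravar; [lra|].
  rewrite <- tech_pow_Rmult, <- (Rmult_1_r (Rabs w)) at 1.
  apply Rmult_le_compat_l; [lra|].
  apply pow_R1_Rle; lra.
Qed.

Lemma is_lim_0_of_inv_bound f C M :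
  (forall y, M <= Rabs y -> Rabs (f y) <= C / Rabs y) ->
  is_lim f p_infty 0 /\ is_lim f m_infty 0.
Proof.
  intros H.
  assert (Hsmall : forall eps : posreal, forall y,
            Rmax M 1 + Rabs C / eps < Rabs y -> Rabs (f y - 0) < eps).
  { intros eps y Hy. pose proof (cond_pos eps) as He.
    pose proof (Rmax_l M 1). pose proof (Rmax_r M 1).
    pose proof (Rle_abs C). assert (0 <= Rabs C / eps) by (apply Rdiv_le_0_compat; [apply Rabs_pos | lra]).
    rewrite Rminus_0_r. eapply Rle_lt_trans; [apply H; lra|].
    apply Rle_lt_trans with (Rabs C / Rabs y); [apply Rmult_le_compat_r; [left; apply Rinv_0_lt_compat|]; lra|].
    assert (Rabs C < eps * Rabs y).
    { replace (Rabs C) with (eps * (Rabs C / eps)) by (field; lra).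
      apply Rmult_lt_compat_l; lra. }
    apply Rmult_lt_reg_r with (Rabs y); [lra|].
    unfold Rdiv. rewrite Rmult_assoc, Rinv_l by lra. lra. }
  split; apply is_lim_spec; intros eps.
  - exists (Rmax M 1 + Rabs C / eps). intros y Hy. apply Hsmall.
    pose proof (Rle_abs y). lra.
  - exists (- (Rmax M 1 + Rabs C / eps)). intros y Hy. apply Hsmall.
    pose proof (Rle_abs (- y)). rewrite Rabs_Ropp in *. lra.
Qed.

Lemma is_lim_poly_gauss j V m : 0 < V ->
  is_lim (fun y => (y - m) ^ j * exp (- ((y - m) ^ 2) / (2 * V))) p_infty 0 /\
  is_lim (fun y => (y - m) ^ j * exp (- ((y - m) ^ 2) / (2 * V))) m_infty 0.
Proof.
  intros HV. apply (is_lim_0_of_inv_bound _ (2 * (2 * V * INR (S j)) ^ S j) (2 * Rabs m + 2)).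
  intros y Hy. pose proof (Rabs_pos m).
  assert (Hym : Rabs y / 2 <= Rabs (y - m)) by (pose proof (Rabs_triang_inv y m); lra).
  eapply Rle_trans; [apply gauss_tail_bound; lra|].
  assert (HC : 0 <= (2 * V * INR (S j)) ^ S j)
    by (apply pow_le, Rmult_le_pos; [lra | apply pos_INR]).
  replace (2 * (2 * V * INR (S j)) ^ S j / Rabs y)
    with ((2 * V * INR (S j)) ^ S j / (Rabs y / 2)) by (field; lra).
  unfold Rdiv. apply Rmult_le_compat_l; [exact HC|]. apply Rinv_le_contravar; lra.
Qed.

Lemma continuous_of_ex_derive (f : R -> R) y : ex_derive f y -> continuous f y.
Proof. apply (ex_derive_continuous (K := R_AbsRing) (V := R_NormedModule)). Qed.

Lemma constant_of_derive_0 F x : (forall y, is_derive F y 0) -> F x = F 0.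
Proof.
  intros H.
  assert (H1 : is_RInt (fun _ => 0) 0 x (minus (F x) (F 0))).
  { apply (is_RInt_derive F (fun _ => 0)); intros; [apply H | apply continuous_const]. }
  pose proof (is_RInt_const (V := R_CompleteNormedModule) 0 x 0) as H2.
  apply (is_RInt_unique (V := R_CompleteNormedModule)) in H1, H2. rewrite H1 in H2.
  change (F x - F 0 = (x - 0) * 0) in H2. lra.
Qed.

Definition gauss (u : R) : R := exp (- (u ^ 2) / 2).

Definition gauss_cumul (w : R) : R := RInt gauss 0 w.

Lemma continuous_gauss y : continuous gauss y.
Proof. apply continuous_of_ex_derive. unfold gauss. auto_derive. auto. Qed.

Lemma ex_RInt_gauss a b : ex_RInt gauss a b.
Proof. apply (ex_RInt_continuous (V := R_CompleteNormedModule)). intros; apply continuous_gauss. Qed.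

Lemma is_derive_gauss_cumul w : is_derive gauss_cumul w (gauss w).
Proof.
  apply is_derive_RInt with 0; [|apply continuous_gauss].
  apply filter_forall. intros b. apply (RInt_correct (V := R_CompleteNormedModule)), ex_RInt_gauss.
Qed.

Lemma gauss_cumul_opp w : gauss_cumul (- w) = - gauss_cumul w.
Proof.
  unfold gauss_cumul.
  pose proof (RInt_comp_lin gauss (-1) 0 0 w (ex_RInt_gauss _ _)) as E.
  replace (-1 * 0 + 0) with 0 in E by ring. replace (-1 * w + 0) with (- w) in E by ring.
  rewrite <- E, (RInt_ext (V := R_CompleteNormedModule)) with (g := fun y => scal (-1) (gauss y)).
  - rewrite (RInt_scal (V := R_CompleteNormedModule)) by apply ex_RInt_gauss.
    change (-1 * RInt gauss 0 w = - RInt gauss 0 w). ring.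
  - intros y _. f_equal. unfold gauss. f_equal. field.
Qed.

(* The classical device for [int_0^oo gauss = sqrt (PI/2)]: [gauss_cumul x ^ 2 + 2 gauss_aux x]
   has zero derivative and equals [2 atan 1 = PI/2] at 0, while [gauss_aux] vanishes at infinity. *)
Definition gauss_aux (x : R) : R :=
  RInt (fun t => exp (- (x ^ 2 * (1 + t ^ 2)) / 2) / (1 + t ^ 2)) 0 1.

Lemma one_plus_sq_pos t : 0 < 1 + t ^ 2.
Proof. pose proof (pow2_ge_0 t). lra. Qed.

Lemma gauss_aux_0 : gauss_aux 0 = PI / 4.
Proof.
  unfold gauss_aux.
  rewrite (RInt_ext (V := R_CompleteNormedModule)) with (g := fun t => / (1 + t ^ 2)).
  2: { intros t _. change (exp (- (0 ^ 2 * (1 + t ^ 2)) / 2) / (1 + t ^ 2) = / (1 + t ^ 2)).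
       replace (- (0 ^ 2 * (1 + t ^ 2)) / 2) with 0 by (simpl; field).
       rewrite exp_0. pose proof (one_plus_sq_pos t). field. lra. }
  rewrite (is_RInt_unique _ 0 1 (atan 1 - atan 0)).
  - rewrite atan_1, atan_0. change (PI / 4 - 0 = PI / 4). ring.
  - apply (is_RInt_derive atan).
    + intros; apply is_derive_Reals, derivable_pt_lim_atan.
    + intros z _. apply continuous_of_ex_derive. auto_derive. pose proof (one_plus_sq_pos z); lra.
Qed.

Lemma is_derive_gauss_aux x : is_derive gauss_aux x (- gauss x * gauss_cumul x).
Proof.
  set (h := fun x t => exp (- (x ^ 2 * (1 + t ^ 2)) / 2) / (1 + t ^ 2)).
  set (dh := fun x t => - x * exp (- (x ^ 2 * (1 + t ^ 2)) / 2)).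
  assert (Hdh : forall u v, is_derive (fun z => h z v) u (dh u v)).
  { intros u v. unfold h, dh. pose proof (one_plus_sq_pos v). auto_derive; [lra|].
    unfold Rdiv in *. simpl in *. field. lra. }
  replace (- gauss x * gauss_cumul x) with (RInt (fun t => Derive (fun u => h u t) x) 0 1).
  - apply (is_derive_RInt_param h 0 1 x).
    + apply filter_forall. intros x0 t _. eexists. apply Hdh.
    + intros t _. apply continuity_2d_pt_ext with dh.
      { intros u v. symmetry. apply is_derive_unique, Hdh. }
      apply continuity_2d_pt_mult.
      { apply continuity_2d_pt_opp, continuity_2d_pt_id1. }
      apply continuity_1d_2d_pt_comp with (f := exp) (g := fun u v => - (u ^ 2 * (1 + v ^ 2)) / 2).
      { apply derivable_continuous_pt, derivable_pt_exp. }
      apply continuity_2d_pt_ext with (fun u v => u * u * (1 + v * v) * (- / 2)).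
      { intros; field. }
      repeat first [ apply continuity_2d_pt_mult | apply continuity_2d_pt_plus
                   | apply continuity_2d_pt_id1 | apply continuity_2d_pt_id2
                   | apply continuity_2d_pt_const ].
    + apply filter_forall. intros y. apply (ex_RInt_continuous (V := R_CompleteNormedModule)).
      intros z _. apply continuous_of_ex_derive. unfold h. auto_derive. pose proof (one_plus_sq_pos z); lra.
  - apply (is_RInt_unique (V := R_CompleteNormedModule)).
    apply is_RInt_ext with (fun t => scal (- gauss x) (scal x (gauss (x * t + 0)))).
    { intros t _. replace (Derive (fun u => h u t) x) with (dh x t)
        by (symmetry; apply is_derive_unique, Hdh). unfold dh, gauss.
      change (- exp (- x ^ 2 / 2) * (x * exp (- (x * t + 0) ^ 2 / 2))
              = - x * exp (- (x ^ 2 * (1 + t ^ 2)) / 2)).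
      replace (- (x ^ 2 * (1 + t ^ 2)) / 2) with (- x ^ 2 / 2 + - (x * t + 0) ^ 2 / 2) by field.
      rewrite exp_plus. ring. }
    apply (is_RInt_scal (V := R_NormedModule)), (is_RInt_comp_lin (V := R_NormedModule)).
    rewrite Rmult_0_r, Rmult_1_r, !Rplus_0_r.
    apply (RInt_correct (V := R_CompleteNormedModule)), ex_RInt_gauss.
Qed.

Lemma gauss_cumul_sq_plus_aux x : gauss_cumul x ^ 2 + 2 * gauss_aux x = PI / 2.
Proof.
  rewrite (constant_of_derive_0 (fun x => gauss_cumul x ^ 2 + 2 * gauss_aux x) x).
  - unfold gauss_cumul. rewrite RInt_point, gauss_aux_0. change (0 ^ 2 + 2 * (PI / 4) = PI / 2). field.
  - intros y. replace 0 with (INR 2 * gauss y * gauss_cumul y ^ pred 2 + 2 * (- gauss y * gauss_cumul y))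
      by (simpl; ring).
    apply (is_derive_plus (fun y => gauss_cumul y ^ 2) (fun y => 2 * gauss_aux y)).
    + apply (is_derive_pow gauss_cumul 2 y (gauss y)), is_derive_gauss_cumul.
    + apply (is_derive_scal gauss_aux y 2), is_derive_gauss_aux.
Qed.

Lemma gauss_aux_bounds x : 0 <= gauss_aux x <= gauss x.
Proof.
  assert (Hex : ex_RInt (fun t => exp (- (x ^ 2 * (1 + t ^ 2)) / 2) / (1 + t ^ 2)) 0 1).
  { apply (ex_RInt_continuous (V := R_CompleteNormedModule)). intros z _.
    apply continuous_of_ex_derive. auto_derive. pose proof (one_plus_sq_pos z); lra. }
  unfold gauss_aux. split.
  - apply RInt_ge_0; [lra | exact Hex|]. intros t _.
    apply Rlt_le, Rdiv_lt_0_compat; [apply exp_pos | apply one_plus_sq_pos].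
  - replace (gauss x) with (RInt (fun _ => gauss x) 0 1)
      by (rewrite RInt_const; change ((1 - 0) * gauss x = gauss x); ring).
    apply RInt_le; [lra | exact Hex | apply ex_RInt_const|]. intros t _.
    pose proof (pow2_ge_0 t). pose proof (pow2_ge_0 x). pose proof (exp_pos (- (x ^ 2 * (1 + t ^ 2)) / 2)).
    unfold gauss. apply Rle_trans with (exp (- (x ^ 2 * (1 + t ^ 2)) / 2)).
    + unfold Rdiv at 1. rewrite <- (Rmult_1_r (exp _)) at 2.
      apply Rmult_le_compat_l; [lra|]. rewrite <- Rinv_1. apply Rinv_le_contravar; lra.
    + apply exp_le_exp_of_le. assert (0 <= x ^ 2 * t ^ 2) by (apply Rmult_le_pos; assumption). lra.
Qed.

Lemma is_lim_gauss_aux : is_lim gauss_aux p_infty 0.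
Proof.
  destruct (is_lim_poly_gauss 0 1 0 ltac:(lra)) as [Hp _].
  apply is_lim_le_le_loc with (fun _ => 0) (fun y => (y - 0) ^ 0 * exp (- ((y - 0) ^ 2) / (2 * 1))).
  - exists 0. intros y _. destruct (gauss_aux_bounds y) as [H1 H2]. split; [exact H1|].
    unfold gauss in H2. rewrite pow_O, Rmult_1_l, Rminus_0_r, Rmult_1_r. exact H2.
  - apply is_lim_const.
  - exact Hp.
Qed.

Lemma is_lim_gauss_cumul_p : is_lim gauss_cumul p_infty (sqrt (2 * PI) / 2).
Proof.
  pose proof PI_RGT_0.
  assert (Hc : sqrt (2 * PI) / 2 = sqrt (PI / 2 - 2 * 0)).
  { symmetry. apply sqrt_lem_1; [lra | pose proof (sqrt_pos (2 * PI)); lra|].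
    replace (sqrt (2 * PI) / 2 * (sqrt (2 * PI) / 2)) with (sqrt (2 * PI) * sqrt (2 * PI) / 4) by field.
    rewrite sqrt_sqrt by lra. field. }
  rewrite Hc. apply is_lim_ext_loc with (fun y => sqrt (PI / 2 - 2 * gauss_aux y)).
  - exists 0. intros y Hy.
    replace (PI / 2 - 2 * gauss_aux y) with (gauss_cumul y ^ 2)
      by (pose proof (gauss_cumul_sq_plus_aux y); lra).
    apply sqrt_pow2. unfold gauss_cumul. apply RInt_ge_0; [lra | apply ex_RInt_gauss|].
    intros; unfold gauss; apply Rlt_le, exp_pos.
  - apply (is_lim_comp_continuous (fun y => PI / 2 - 2 * gauss_aux y) sqrt p_infty).
    apply (is_lim_minus (fun _ => PI / 2) (fun y => 2 * gauss_aux y) p_infty (PI / 2) (2 * 0)).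
    + apply is_lim_const.
    + apply (is_lim_scal_l gauss_aux 2 p_infty 0), is_lim_gauss_aux.
    + reflexivity.
    + apply continuous_sqrt.
Qed.

Lemma is_lim_gauss_cumul_m : is_lim gauss_cumul m_infty (- (sqrt (2 * PI) / 2)).
Proof.
  pose proof is_lim_gauss_cumul_p as H. apply is_lim_spec in H. apply is_lim_spec.
  intros eps. destruct (H eps) as [M HM]. exists (- M). intros y Hy.
  specialize (HM (- y) ltac:(lra)). rewrite gauss_cumul_opp in HM.
  replace (gauss_cumul y - - (sqrt (2 * PI) / 2)) with (- (- gauss_cumul y - sqrt (2 * PI) / 2)) by ring.
  rewrite Rabs_Ropp. exact HM.
Qed.

Definition normal_pdf (m V y : R) : R := exp (- ((y - m) ^ 2) / (2 * V)) / sqrt (2 * PI * V).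

Definition Ncdf (d : R) : R := / 2 + gauss_cumul d / sqrt (2 * PI).

Definition normal_cdf (m V y : R) : R := Ncdf ((y - m) / sqrt V).

Lemma sqrt_2PI_pos : 0 < sqrt (2 * PI).
Proof. apply sqrt_lt_R0. pose proof PI_RGT_0; lra. Qed.

Lemma sqrt_2PI_mult V : 0 < V -> sqrt (2 * PI * V) = sqrt (2 * PI) * sqrt V.
Proof. intros HV. apply sqrt_mult_alt. pose proof PI_RGT_0; lra. Qed.

Lemma is_derive_Ncdf d : is_derive Ncdf d (Nprime d).
Proof.
  pose proof sqrt_2PI_pos. unfold Ncdf, Nprime. auto_derive.
  - eexists; apply is_derive_gauss_cumul.
  - replace (Derive (fun x => gauss_cumul x) d) with (gauss d)
      by (symmetry; apply is_derive_unique, is_derive_gauss_cumul).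
    unfold gauss. R_eq. field. lra.
Qed.

Lemma Ncdf_opp d : Ncdf (- d) = 1 - Ncdf d.
Proof. pose proof sqrt_2PI_pos. unfold Ncdf. rewrite gauss_cumul_opp. field. lra. Qed.

Lemma is_lim_Ncdf : is_lim Ncdf p_infty 1 /\ is_lim Ncdf m_infty 0.
Proof.
  pose proof sqrt_2PI_pos.
  assert (Hlim : forall (x : Rbar) (l : R), is_lim gauss_cumul x l ->
            is_lim Ncdf x (/ 2 + l / sqrt (2 * PI))).
  { intros x l Hl. apply (is_lim_plus _ _ _ (/ 2) (l / sqrt (2 * PI))).
    - apply is_lim_const.
    - apply (is_lim_scal_r gauss_cumul (/ sqrt (2 * PI)) x l), Hl.
    - reflexivity. }
  split.
  - replace 1 with (/ 2 + sqrt (2 * PI) / 2 / sqrt (2 * PI)) by (field; lra).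
    apply Hlim, is_lim_gauss_cumul_p.
  - replace 0 with (/ 2 + - (sqrt (2 * PI) / 2) / sqrt (2 * PI)) by (field; lra).
    apply Hlim, is_lim_gauss_cumul_m.
Qed.

Lemma is_derive_normal_pdf m V y : 0 < V ->
  is_derive (normal_pdf m V) y (- (y - m) / V * normal_pdf m V y).
Proof.
  intros HV. pose proof sqrt_2PI_pos. pose proof (sqrt_lt_R0 V HV).
  unfold normal_pdf. rewrite sqrt_2PI_mult by lra.
  auto_derive; [nra|]. R_eq. unfold Rminus, Rdiv. simpl. field. lra.
Qed.

Lemma is_derive_normal_cdf m V y : 0 < V -> is_derive (normal_cdf m V) y (normal_pdf m V y).
Proof.
  intros HV. pose proof sqrt_2PI_pos. pose proof (sqrt_lt_R0 V HV).
  unfold normal_cdf. auto_derive.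
  - eexists; apply is_derive_Ncdf.
  - replace (Derive (fun x => Ncdf x) ((y + - m) * / sqrt V)) with (Nprime ((y + - m) * / sqrt V))
      by (symmetry; apply is_derive_unique, is_derive_Ncdf).
    unfold Nprime, normal_pdf. rewrite sqrt_2PI_mult by lra. R_eq.
    replace (- ((y + - m) * / sqrt V) ^ 2 / 2) with (- (y - m) ^ 2 / (2 * V)).
    + field. lra.
    + rewrite Rpow_mult_distr, pow_inv, pow2_sqrt by lra. field. lra.
Qed.

Lemma is_lim_normal_cdf m V : 0 < V ->
  is_lim (normal_cdf m V) p_infty 1 /\ is_lim (normal_cdf m V) m_infty 0.
Proof.
  intros HV. pose proof (sqrt_lt_R0 V HV). destruct is_lim_Ncdf as [Hp Hm].
  assert (Hlin : forall x : Rbar, x = p_infty \/ x = m_infty ->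
             Rbar_plus (Rbar_mult (/ sqrt V) x) (- m / sqrt V) = x).
  { assert (0 < / sqrt V) by (apply Rinv_0_lt_compat; lra).
    intros x [-> | ->]; simpl;
      (destruct (Rle_dec 0 (/ sqrt V)) as [Hle|]; [|lra]);
      (destruct (Rle_lt_or_eq_dec 0 (/ sqrt V) Hle); [reflexivity | lra]). }
  split; (apply (is_lim_ext (fun y => Ncdf (/ sqrt V * y + - m / sqrt V)));
          [intros y; unfold normal_cdf; f_equal; R_eq; field; lra|]);
    (apply is_lim_comp_lin; [|apply Rinv_neq_0_compat; lra]); rewrite Hlin; auto.
Qed.

Lemma is_lim_cubic_normal_pdf m V r0 r1 r2 r3 : 0 < V ->
  let f y := (r0 + r1 * (y - m) + r2 * (y - m) ^ 2 + r3 * (y - m) ^ 3) * normal_pdf m V y in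
  is_lim f p_infty 0 /\ is_lim f m_infty 0.
Proof.
  intros HV f.
  assert (Hlim0 : forall (x : Rbar) (g h : R -> R), is_lim g x 0 -> is_lim h x 0 ->
            is_lim (fun y => g y + h y) x 0)
    by (intros; eapply is_lim_plus; eauto; unfold is_Rbar_plus; simpl; do 2 f_equal; ring).
  assert (Hscal0 : forall (x : Rbar) (g : R -> R) a, is_lim g x 0 -> is_lim (fun y => a * g y) x 0).
  { intros x g a H. replace (Finite 0) with (Rbar_mult a 0) by (simpl; f_equal; ring).
    apply is_lim_scal_l, H. }
  set (c := / sqrt (2 * PI * V)).
  set (g j y := (y - m) ^ j * exp (- ((y - m) ^ 2) / (2 * V))).
  assert (Ef : forall y, c * r0 * g 0%nat y + c * r1 * g 1%nat y + c * r2 * g 2%nat y + c * r3 * g 3%nat y = f y).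
  { intros y. unfold f, g, c, normal_pdf. rewrite pow_O, pow_1. field.
    apply Rgt_not_eq, sqrt_lt_R0. pose proof PI_RGT_0. nra. }
  destruct (is_lim_poly_gauss 0 V m HV) as [A0 B0].
  destruct (is_lim_poly_gauss 1 V m HV) as [A1 B1].
  destruct (is_lim_poly_gauss 2 V m HV) as [A2 B2].
  destruct (is_lim_poly_gauss 3 V m HV) as [A3 B3].
  split; (eapply is_lim_ext; [exact Ef|]); repeat apply Hlim0; apply Hscal0; assumption.
Qed.

Definition quartic (p0 p1 p2 p3 p4 z : R) : R :=
  p0 + p1 * z + p2 * z ^ 2 + p3 * z ^ 3 + p4 * z ^ 4.

(* [E (quartic (mu + sqrt V Z))] for a standard normal [Z], from its moments [0, 1, 0, 3]. *)
Definition gauss_quartic_mean (mu V p0 p1 p2 p3 p4 : R) : R :=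
  p0 + p1 * mu + p2 * (mu ^ 2 + V) + p3 * (mu ^ 3 + 3 * mu * V)
  + p4 * (mu ^ 4 + 6 * mu ^ 2 * V + 3 * V ^ 2).

Lemma improper_integral_quartic_normal c mu V p0 p1 p2 p3 p4 : 0 < V ->
  improper_integral (fun y => quartic p0 p1 p2 p3 p4 (y - c) * normal_pdf (c + mu) V y)
    (gauss_quartic_mean mu V p0 p1 p2 p3 p4).
Proof.
  intros HV. set (m := c + mu). set (E := gauss_quartic_mean mu V p0 p1 p2 p3 p4).
  set (q1 := p1 + 2 * p2 * mu + 3 * p3 * mu ^ 2 + 4 * p4 * mu ^ 3).
  set (q2 := p2 + 3 * p3 * mu + 6 * p4 * mu ^ 2).
  set (q3 := p3 + 4 * p4 * mu).
  set (r0 := - V * (q1 + 2 * V * q3)). set (r1 := - V * (q2 + 3 * V * p4)).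
  set (r2 := - V * q3). set (r3 := - V * p4).
  (* [q_i] are the coefficients of the quartic around [mu]; [F] is an antiderivative *)
  set (F y := E * normal_cdf m V y
              + (r0 + r1 * (y - m) + r2 * (y - m) ^ 2 + r3 * (y - m) ^ 3) * normal_pdf m V y).
  destruct (is_lim_normal_cdf m V HV) as [Cp Cm].
  destruct (is_lim_cubic_normal_pdf m V r0 r1 r2 r3 HV) as [Pp Pm].
  replace E with (E * 1 + 0 - (E * 0 + 0)) by ring.
  apply (improper_integral_antiderivative _ F).
  - intros y. unfold F. auto_derive.
    + repeat split; eexists; [apply is_derive_normal_cdf | apply is_derive_normal_pdf]; exact HV.
    + replace (Derive (fun x => normal_cdf m V x) y) with (normal_pdf m V y)
        by (symmetry; apply is_derive_unique, is_derive_normal_cdf, HV).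
      replace (Derive (fun x => normal_pdf m V x) y) with (- (y - m) / V * normal_pdf m V y)
        by (symmetry; apply is_derive_unique, is_derive_normal_pdf, HV).
      unfold E, gauss_quartic_mean, quartic, r0, r1, r2, r3, q1, q2, q3, m.
      R_eq. field. lra.
  - intros y. apply continuous_of_ex_derive. unfold quartic. auto_derive.
    eexists; apply is_derive_normal_pdf; exact HV.
  - apply (is_lim_plus _ _ _ (E * 0) 0); [apply (is_lim_scal_l _ E _ 0), Cm | exact Pm | reflexivity].
  - apply (is_lim_plus _ _ _ (E * 1) 0); [apply (is_lim_scal_l _ E _ 1), Cp | exact Pp | reflexivity].
Qed.

Lemma normal_pdf_mul a A b B x c y : 0 < A -> 0 < B ->
  normal_pdf a A (x - y) * normal_pdf b B (y - c)
  = normal_pdf (a + b) (A + B) (x - c)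
    * normal_pdf (c + b + B * (x - c - a - b) / (A + B)) (A * B / (A + B)) y.
Proof.
  intros HA HB. pose proof sqrt_2PI_pos.
  assert (HV : 0 < A * B / (A + B)) by (apply Rdiv_lt_0_compat; nra).
  unfold normal_pdf. rewrite !sqrt_2PI_mult by lra.
  assert (Hs : sqrt A * sqrt B = sqrt (A + B) * sqrt (A * B / (A + B))).
  { rewrite <- !sqrt_mult_alt by nra. f_equal. field. lra. }
  pose proof (sqrt_lt_R0 _ HA). pose proof (sqrt_lt_R0 _ HB). pose proof (sqrt_lt_R0 _ HV).
  pose proof (sqrt_lt_R0 (A + B) ltac:(lra)).
  replace (exp (- (x - y - a) ^ 2 / (2 * A)) / (sqrt (2 * PI) * sqrt A)
           * (exp (- (y - c - b) ^ 2 / (2 * B)) / (sqrt (2 * PI) * sqrt B)))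
    with (exp (- (x - y - a) ^ 2 / (2 * A) + - (y - c - b) ^ 2 / (2 * B))
          / (sqrt (2 * PI) * sqrt (2 * PI) * (sqrt A * sqrt B)))
    by (rewrite exp_plus; field; lra).
  rewrite Hs. replace (- (x - y - a) ^ 2 / (2 * A) + - (y - c - b) ^ 2 / (2 * B))
    with (- (x - c - (a + b)) ^ 2 / (2 * (A + B))
          + - (y - (c + b + B * (x - c - a - b) / (A + B))) ^ 2 / (2 * (A * B / (A + B))))
    by (field; lra).
  rewrite exp_plus. field. lra.
Qed.

Lemma sq_mult_pos s tau : 0 < s -> 0 < tau -> 0 < s ^ 2 * tau.
Proof. intros. apply Rmult_lt_0_compat; [apply pow_lt|]; assumption. Qed.

Lemma sqrt_sq_mult s tau : 0 < s -> 0 < tau -> sqrt (s ^ 2 * tau) = s * sqrt tau.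
Proof. intros. rewrite sqrt_mult_alt, <- Rsqr_pow2, sqrt_Rsqr by nra; lra. Qed.

Lemma phi_normal_pdf tau z s : 0 < tau -> 0 < s ->
  phi tau z s = normal_pdf (s ^ 2 * tau / 2) (s ^ 2 * tau) z.
Proof.
  intros Ht Hs. pose proof (sqrt_lt_R0 _ Ht). pose proof sqrt_2PI_pos.
  pose proof (sq_mult_pos s tau Hs Ht).
  unfold phi, normal_pdf.
  rewrite (sqrt_2PI_mult (s ^ 2 * tau)), sqrt_sq_mult, (sqrt_2PI_mult tau) by lra.
  replace (- / 2 * (z / (s * sqrt tau) - s * sqrt tau / 2) ^ 2)
    with (- (z - s ^ 2 * tau / 2) ^ 2 / (2 * (s ^ 2 * tau))).
  - field. lra.
  - elim_sqrt tau. field. lra.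
Qed.

Lemma locally_pos s : 0 < s -> locally s (fun u => 0 < u).
Proof. intros Hs. apply (locally_interval _ s 0 p_infty); simpl; auto. Qed.

Definition dlog_phi_dz (tau z s : R) : R := - z / (s ^ 2 * tau) + / 2.

Definition dlog_phi_ds (tau z s : R) : R :=
  s * tau * (dlog_phi_dz tau z s ^ 2 - / (s ^ 2 * tau) - dlog_phi_dz tau z s).

Lemma is_derive_phi_z tau z s : 0 < tau -> 0 < s ->
  is_derive (fun z => phi tau z s) z (phi tau z s * dlog_phi_dz tau z s).
Proof.
  intros Ht Hs. pose proof (sq_mult_pos s tau Hs Ht) as HV.
  apply (is_derive_ext (normal_pdf (s ^ 2 * tau / 2) (s ^ 2 * tau))).
  { intros; symmetry; apply phi_normal_pdf; assumption. }
  rewrite phi_normal_pdf by assumption. unfold dlog_phi_dz.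
  replace (normal_pdf (s ^ 2 * tau / 2) (s ^ 2 * tau) z * (- z / (s ^ 2 * tau) + / 2))
    with (- (z - s ^ 2 * tau / 2) / (s ^ 2 * tau) * normal_pdf (s ^ 2 * tau / 2) (s ^ 2 * tau) z)
    by (field; lra).
  apply is_derive_normal_pdf, HV.
Qed.

Lemma is_derive_phi_s tau z s : 0 < tau -> 0 < s ->
  is_derive (fun s => phi tau z s) s (phi tau z s * dlog_phi_ds tau z s).
Proof.
  intros Ht Hs. pose proof sqrt_2PI_pos. pose proof (sqrt_lt_R0 _ Ht).
  unfold phi, dlog_phi_ds, dlog_phi_dz. rewrite sqrt_2PI_mult by lra.
  auto_derive.
  { repeat split; apply Rgt_not_eq; repeat apply Rmult_lt_0_compat; assumption. }
  R_eq. elim_sqrt tau. unfold Rminus, Rdiv. simpl. field. lra.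
Qed.

Lemma Derive_phi_z tau z s : 0 < tau -> 0 < s ->
  Derive (fun z : R => phi tau z s) z = phi tau z s * dlog_phi_dz tau z s.
Proof. intros; apply is_derive_unique, is_derive_phi_z; assumption. Qed.

Lemma Derive_phi_s tau z s : 0 < tau -> 0 < s ->
  Derive (fun s : R => phi tau z s) s = phi tau z s * dlog_phi_ds tau z s.
Proof. intros; apply is_derive_unique, is_derive_phi_s; assumption. Qed.

Lemma heat_pos tau f x s : 0 < tau -> heat tau f x s = int_R (fun y => phi tau (x - y) s * f y s).
Proof. intros H. unfold heat. destruct (Rle_dec tau 0); [lra | reflexivity]. Qed.

Lemma heat_phi_quartic a b L p0 p1 p2 p3 p4 (f : R -> R -> R) x s : 0 < a -> 0 < b -> 0 < s ->
  (forall y, f y s = phi b (y - L) s * quartic p0 p1 p2 p3 p4 (y - L)) ->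
  heat a f x s = phi (a + b) (x - L) s
    * gauss_quartic_mean (b * (x - L) / (a + b)) (s ^ 2 * a * b / (a + b)) p0 p1 p2 p3 p4.
Proof.
  intros Ha Hb Hs Hf. rewrite heat_pos by lra.
  pose proof (sq_mult_pos s a Hs Ha). pose proof (sq_mult_pos s b Hs Hb).
  assert (HV : 0 < s ^ 2 * a * b / (a + b)) by (apply Rdiv_lt_0_compat; nra).
  rewrite (functional_extensionality _ (fun y => phi (a + b) (x - L) s *
     (quartic p0 p1 p2 p3 p4 (y - L) * normal_pdf (L + b * (x - L) / (a + b)) (s ^ 2 * a * b / (a + b)) y))).
  - apply int_R_eq, improper_integral_scal, improper_integral_quartic_normal, HV.
  - intros y. rewrite Hf, !phi_normal_pdf by lra.
    transitivity (quartic p0 p1 p2 p3 p4 (y - L) *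
      (normal_pdf (s ^ 2 * a / 2) (s ^ 2 * a) (x - y) * normal_pdf (s ^ 2 * b / 2) (s ^ 2 * b) (y - L)));
      [ring|].
    rewrite normal_pdf_mul by lra.
    replace (s ^ 2 * a / 2 + s ^ 2 * b / 2) with (s ^ 2 * (a + b) / 2) by field.
    replace (s ^ 2 * a + s ^ 2 * b) with (s ^ 2 * (a + b)) by field.
    replace (L + s ^ 2 * b / 2 + s ^ 2 * b * (x - L - s ^ 2 * a / 2 - s ^ 2 * b / 2) / (s ^ 2 * (a + b)))
      with (L + b * (x - L) / (a + b)) by (field; lra).
    replace (s ^ 2 * a * (s ^ 2 * b) / (s ^ 2 * (a + b))) with (s ^ 2 * a * b / (a + b)) by (field; lra).
    ring.
Qed.

Definition black_scholes (K tau x s : R) : R :=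
  exp x * Ncdf (d_minus K tau x s + s * sqrt tau) - K * Ncdf (d_minus K tau x s).

Lemma continuous_payoff K s y : continuous (fun y => payoff K y s) y.
Proof.
  apply (continuous_ext (fun y => ((exp y - K) + Rabs (exp y - K)) / 2)).
  { intros z. unfold payoff, Rmax. destruct (Rle_dec (exp z - K) 0).
    - rewrite Rabs_left1 by lra. R_eq. field.
    - rewrite Rabs_right by lra. R_eq. field. }
  apply (continuous_mult (K := R_AbsRing)); [|apply continuous_const].
  apply (continuous_plus (K := R_AbsRing) (V := R_NormedModule) (fun y => exp y - K)).
  - apply continuous_of_ex_derive. auto_derive. auto.
  - apply continuous_Rabs_comp, continuous_of_ex_derive. auto_derive. auto.
Qed.

Lemma heat_payoff K tau x s : 0 < K -> 0 < tau -> 0 < s ->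
  heat tau (payoff K) x s = black_scholes K tau x s.
Proof.
  intros HK Ht Hs. rewrite heat_pos by lra.
  set (A := s ^ 2 * tau). assert (HA : 0 < A) by (apply sq_mult_pos; assumption).
  assert (Hphi : forall y, phi tau (x - y) s = normal_pdf (x - A / 2) A y).
  { intros y. rewrite phi_normal_pdf by assumption. unfold normal_pdf. fold A.
    f_equal. f_equal. field. lra. }
  assert (Hphi_exp : forall y, phi tau (x - y) s * exp y = exp x * normal_pdf (x + A / 2) A y).
  { intros y. rewrite Hphi. unfold normal_pdf.
    assert (0 < sqrt (2 * PI * A)) by (apply sqrt_lt_R0; pose proof PI_RGT_0; nra).
    transitivity (exp (- (y - (x - A / 2)) ^ 2 / (2 * A)) * exp y / sqrt (2 * PI * A));
      [field; lra|].
    transitivity (exp x * exp (- (y - (x + A / 2)) ^ 2 / (2 * A)) / sqrt (2 * PI * A));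
      [|field; lra].
    rewrite <- !exp_plus. do 2 f_equal. field. lra. }
  rewrite (int_R_antiderivative_halfline _
    (fun y => exp x * normal_cdf (x + A / 2) A y - K * normal_cdf (x - A / 2) A y)
    (ln K) (exp x * 1 - K * 1)).
  - unfold black_scholes, normal_cdf.
    pose proof (sqrt_lt_R0 _ Ht).
    replace ((ln K - (x + A / 2)) / sqrt A) with (- (d_minus K tau x s + s * sqrt tau)).
    2: { unfold A, d_minus. rewrite sqrt_sq_mult by lra. elim_sqrt tau. field. lra. }
    replace ((ln K - (x - A / 2)) / sqrt A) with (- d_minus K tau x s).
    2: { unfold A, d_minus. rewrite sqrt_sq_mult by lra. elim_sqrt tau. field. lra. }
    rewrite !Ncdf_opp. ring.
  - intros y Hy. unfold payoff. rewrite Rmax_right; [ring|].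
    pose proof (exp_le_exp_of_le _ _ Hy). rewrite exp_ln in * by lra. lra.
  - intros y Hy. pose proof (exp_le_exp_of_le _ _ Hy). rewrite exp_ln in * by lra.
    unfold payoff. rewrite Rmax_left by lra.
    replace (phi tau (x - y) s * (exp y - K))
      with (exp x * normal_pdf (x + A / 2) A y - K * normal_pdf (x - A / 2) A y)
      by (rewrite <- Hphi_exp, Hphi; ring).
    apply (is_derive_minus (fun y => exp x * normal_cdf (x + A / 2) A y)
                           (fun y => K * normal_cdf (x - A / 2) A y));
      apply is_derive_scal, is_derive_normal_cdf, HA.
  - intros y. apply (continuous_mult (K := R_AbsRing)); [|apply continuous_payoff].
    pose proof (sqrt_lt_R0 _ Ht). pose proof PI_RGT_0.
    assert (0 < sqrt (2 * PI * tau)) by (apply sqrt_lt_R0; nra).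
    apply continuous_of_ex_derive. unfold phi. auto_derive.
    repeat split; apply Rgt_not_eq, Rmult_lt_0_compat; assumption.
  - destruct (is_lim_normal_cdf (x + A / 2) A HA) as [L1 _].
    destruct (is_lim_normal_cdf (x - A / 2) A HA) as [L2 _].
    apply (is_lim_minus _ _ _ (exp x * 1) (K * 1)); [| | reflexivity].
    + apply (is_lim_scal_l _ (exp x) _ 1), L1.
    + apply (is_lim_scal_l _ K _ 1), L2.
Qed.

Lemma Nprime_d_minus K t x s : 0 < t -> 0 < s ->
  Nprime (d_minus K t x s) = s * sqrt t * phi t (x - ln K) s.
Proof.
  intros Ht Hs. pose proof sqrt_2PI_pos. pose proof (sqrt_lt_R0 _ Ht).
  unfold Nprime, d_minus, phi. rewrite sqrt_2PI_mult by lra.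
  replace (- ((x - ln K) / (s * sqrt t) - s * sqrt t / 2) ^ 2 / 2)
    with (- / 2 * ((x - ln K) / (s * sqrt t) - s * sqrt t / 2) ^ 2) by (field; lra).
  field. lra.
Qed.

Lemma exp_Nprime_d_plus K t x s : 0 < K -> 0 < t -> 0 < s ->
  exp x * Nprime (d_minus K t x s + s * sqrt t) = K * Nprime (d_minus K t x s).
Proof.
  intros HK Ht Hs. pose proof (sqrt_lt_R0 _ Ht). unfold Nprime, d_minus.
  transitivity (/ sqrt (2 * PI)
    * exp (x + - ((x - ln K) / (s * sqrt t) - s * sqrt t / 2 + s * sqrt t) ^ 2 / 2));
    [rewrite exp_plus; ring|].
  transitivity (/ sqrt (2 * PI) * exp (ln K + - ((x - ln K) / (s * sqrt t) - s * sqrt t / 2) ^ 2 / 2));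
    [|rewrite exp_plus, exp_ln by lra; ring].
  do 2 f_equal. elim_sqrt t. field. lra.
Qed.

Lemma Ds_heat_payoff K tau x s : 0 < K -> 0 < tau -> 0 < s ->
  Ds (heat tau (payoff K)) x s = K * s * tau * phi tau (x - ln K) s.
Proof.
  intros HK Ht Hs. pose proof (sqrt_lt_R0 _ Ht). unfold Ds. apply deriv1_is.
  apply is_derive_ext_loc with (black_scholes K tau x).
  { apply (filter_imp (fun u => 0 < u)); [|apply locally_pos, Hs].
    intros u Hu. symmetry. apply heat_payoff; assumption. }
  set (Dm := - (x - ln K) / (s ^ 2 * sqrt tau) - sqrt tau / 2).
  assert (Hdm : is_derive (fun u => d_minus K tau x u) s Dm).
  { unfold d_minus, Dm. auto_derive; [nra|]. R_eq. field. lra. }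
  assert (Hdp : is_derive (fun u => d_minus K tau x u + u * sqrt tau) s (Dm + sqrt tau)).
  { apply (is_derive_plus (fun u => d_minus K tau x u) (fun u => u * sqrt tau)); [exact Hdm|].
    auto_derive; [auto | R_eq; ring]. }
  replace (K * s * tau * phi tau (x - ln K) s)
    with (exp x * (Dm + sqrt tau) * Nprime (d_minus K tau x s + s * sqrt tau)
          - K * (Dm * Nprime (d_minus K tau x s))).
  - apply (is_derive_minus (fun u => exp x * Ncdf (d_minus K tau x u + u * sqrt tau))
                           (fun u => K * Ncdf (d_minus K tau x u))).
    + rewrite Rmult_assoc. apply is_derive_scal, (is_derive_comp Ncdf); [apply is_derive_Ncdf | exact Hdp].
    + apply is_derive_scal, (is_derive_comp Ncdf); [apply is_derive_Ncdf | exact Hdm].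
  - replace (exp x * (Dm + sqrt tau) * Nprime (d_minus K tau x s + s * sqrt tau))
      with ((Dm + sqrt tau) * (exp x * Nprime (d_minus K tau x s + s * sqrt tau))) by ring.
    rewrite exp_Nprime_d_plus, Nprime_d_minus by assumption.
    unfold Dm. elim_sqrt tau. field. lra.
Qed.

Section Duhamel.

Variables (K rho k0 theta : R).
Hypothesis HK : 0 < K.

Lemma L1_heat_payoff tau y s : 0 < tau -> 0 < s ->
  L1 rho k0 theta (heat tau (payoff K)) y s
  = phi tau (y - ln K) s
    * quartic (K * s * tau * (k0 * (theta - s) + rho * s ^ 2 / 2)) (- rho * s * K) 0 0 0 (y - ln K).
Proof.
  intros Ht Hs. unfold L1, Defs.Dx.
  rewrite (functional_extensionality (fun y0 => Ds (heat tau (payoff K)) y0 s)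
             (fun y0 => K * s * tau * phi tau (y0 - ln K) s))
    by (intros; apply Ds_heat_payoff; assumption).
  rewrite Ds_heat_payoff by assumption.
  rewrite (deriv1_is _ _ (K * s * tau * (phi tau (y - ln K) s * dlog_phi_dz tau (y - ln K) s))).
  - unfold quartic, dlog_phi_dz. field. lra.
  - auto_derive.
    + eexists; apply is_derive_phi_z; assumption.
    + rewrite Derive_phi_z by assumption. unfold Rminus. R_eq. ring.
Qed.

Lemma L2_heat_payoff tau y s : 0 < tau -> 0 < s ->
  L2 (heat tau (payoff K)) y s
  = phi tau (y - ln K) s * quartic (- s ^ 4 * tau ^ 2 * K / 8) 0 (K / 2) 0 0 (y - ln K).
Proof.
  intros Ht Hs. unfold L2, Ds at 1.
  rewrite (deriv1_is _ _ (K * tau * phi tau (y - ln K) s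
                          + K * s * tau * (phi tau (y - ln K) s * dlog_phi_ds tau (y - ln K) s))).
  - unfold quartic, dlog_phi_ds, dlog_phi_dz. field. lra.
  - apply is_derive_ext_loc with (fun u => K * u * tau * phi tau (y - ln K) u).
    { apply (filter_imp (fun u => 0 < u)); [|apply locally_pos, Hs].
      intros u Hu. symmetry. apply Ds_heat_payoff; assumption. }
    auto_derive.
    + eexists; apply is_derive_phi_s; assumption.
    + rewrite Derive_phi_s by assumption. R_eq. ring.
Qed.

Definition duhamel1_rate (t1 s X : R) : R :=
  K * s * (k0 * (theta - s) + rho * (s ^ 2 / 2 - X / t1)).

Lemma heat_L1_heat_payoff t1 t2 y s : 0 < t2 -> t2 < t1 -> 0 < s ->
  heat (t1 - t2) (L1 rho k0 theta (heat t2 (payoff K))) y s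
  = phi t1 (y - ln K) s * (t2 * duhamel1_rate t1 s (y - ln K)).
Proof.
  intros H2 H12 Hs.
  rewrite (heat_phi_quartic (t1 - t2) t2 (ln K)
             (K * s * t2 * (k0 * (theta - s) + rho * s ^ 2 / 2)) (- rho * s * K) 0 0 0)
    by (try lra; intros; apply L1_heat_payoff; lra).
  replace (t1 - t2 + t2) with t1 by ring.
  unfold gauss_quartic_mean, duhamel1_rate. field. lra.
Qed.

Definition L1_duhamel1_coef (t1 s : R) (i : nat) : R :=
  match i with
  | 0%nat => - k0 ^ 2 * s * (theta - s) + rho * k0 * s ^ 2 * (theta - 3 * s / 2) + 3 * rho ^ 2 * s ^ 4 / 4
             - s ^ 2 * t1 * (k0 * (theta - s) + rho * s ^ 2 / 2) ^ 2 / 4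
  | 1%nat => rho * k0 * (2 * theta - s) / t1 + rho * s ^ 2 * (k0 * (theta - s) + rho * s ^ 2 / 2) / 2
  | 2%nat => k0 ^ 2 * (theta - s) ^ 2 / (s ^ 2 * t1) + rho * k0 * (theta - s) / t1 - 3 * rho ^ 2 / t1 ^ 2
  | 3%nat => - 2 * rho * k0 * (theta - s) / (s ^ 2 * t1 ^ 2) - rho ^ 2 / t1 ^ 2
  | 4%nat => rho ^ 2 / (s ^ 2 * t1 ^ 3)
  | _ => 0
  end.

Lemma L1_heat_L1_heat_payoff t1 t2 y s : 0 < t2 -> t2 < t1 -> 0 < s ->
  L1 rho k0 theta (heat (t1 - t2) (L1 rho k0 theta (heat t2 (payoff K)))) y s
  = phi t1 (y - ln K) s
    * quartic (t2 * K * L1_duhamel1_coef t1 s 0) (t2 * K * L1_duhamel1_coef t1 s 1)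
              (t2 * K * L1_duhamel1_coef t1 s 2) (t2 * K * L1_duhamel1_coef t1 s 3)
              (t2 * K * L1_duhamel1_coef t1 s 4) (y - ln K).
Proof.
  intros H2 H12 Hs. assert (H1 : 0 < t1) by lra.
  set (f := heat (t1 - t2) (L1 rho k0 theta (heat t2 (payoff K)))).
  set (g X := phi t1 X s * (dlog_phi_ds t1 X s * (t2 * duhamel1_rate t1 s X)
                + t2 * K * (k0 * theta - 2 * k0 * s + 3 * rho * s ^ 2 / 2 - rho * X / t1))).
  assert (HDs : forall y0, Ds f y0 s = g (y0 - ln K)).
  { intros y0. unfold Ds. apply deriv1_is.
    apply is_derive_ext_loc with (fun u => phi t1 (y0 - ln K) u * (t2 * duhamel1_rate t1 u (y0 - ln K))).
    { apply (filter_imp (fun u => 0 < u)); [|apply locally_pos, Hs].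
      intros u Hu. symmetry. apply heat_L1_heat_payoff; assumption. }
    unfold g, duhamel1_rate. auto_derive.
    - eexists; apply is_derive_phi_s; assumption.
    - rewrite Derive_phi_s by assumption. R_eq. field. lra. }
  unfold L1 at 1, Defs.Dx. rewrite (functional_extensionality _ _ HDs), HDs.
  unfold g, dlog_phi_ds, duhamel1_rate. cbv beta.
  erewrite deriv1_is
    by (unfold dlog_phi_dz; auto_derive; [eexists; apply is_derive_phi_z; assumption | reflexivity]).
  rewrite Derive_phi_z by assumption.
  unfold quartic, L1_duhamel1_coef, dlog_phi_dz, Rminus. R_eq. field. lra.
Qed.

Definition duhamel2_rate (t t1 s X : R) : R :=
  gauss_quartic_mean (t1 * X / t) (s ^ 2 * (t - t1) * t1 / t)
    (K * L1_duhamel1_coef t1 s 0) (K * L1_duhamel1_coef t1 s 1) (K * L1_duhamel1_coef t1 s 2)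
    (K * L1_duhamel1_coef t1 s 3) (K * L1_duhamel1_coef t1 s 4).

Lemma duhamel2_rate_affine t s X : 0 < t -> 0 < s -> forall t1, 0 < t1 ->
  duhamel2_rate t t1 s X
  = 2 * duhamel2_rate t (t / 2) s X - duhamel2_rate t t s X
    + 2 * (duhamel2_rate t t s X - duhamel2_rate t (t / 2) s X) / t * t1.
Proof.
  intros Ht Hs t1 H1. unfold duhamel2_rate, gauss_quartic_mean, L1_duhamel1_coef. field. lra.
Qed.

Lemma heat_L1_heat_L1_heat_payoff t t1 t2 x s : 0 < t2 -> t2 < t1 -> t1 < t -> 0 < s ->
  heat (t - t1) (L1 rho k0 theta (heat (t1 - t2) (L1 rho k0 theta (heat t2 (payoff K))))) x s
  = phi t (x - ln K) s * (t2 * duhamel2_rate t t1 s (x - ln K)).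
Proof.
  intros H2 H12 H1t Hs.
  rewrite (heat_phi_quartic (t - t1) t1 (ln K)
             (t2 * K * L1_duhamel1_coef t1 s 0) (t2 * K * L1_duhamel1_coef t1 s 1)
             (t2 * K * L1_duhamel1_coef t1 s 2) (t2 * K * L1_duhamel1_coef t1 s 3)
             (t2 * K * L1_duhamel1_coef t1 s 4))
    by (try lra; intros; apply L1_heat_L1_heat_payoff; lra).
  replace (t - t1 + t1) with t by ring.
  unfold duhamel2_rate, gauss_quartic_mean. field. lra.
Qed.

Lemma heat_L2_heat_payoff t t1 x s : 0 < t1 -> t1 < t -> 0 < s ->
  heat (t - t1) (L2 (heat t1 (payoff K))) x s
  = phi t (x - ln K) s
    * (t1 * (K * s ^ 2 / 2) + t1 ^ 2 * (K / 2 * ((x - ln K) ^ 2 / t ^ 2 - s ^ 2 / t - s ^ 4 / 4))).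
Proof.
  intros H1 H1t Hs.
  rewrite (heat_phi_quartic (t - t1) t1 (ln K) (- s ^ 4 * t1 ^ 2 * K / 8) 0 (K / 2) 0 0)
    by (try lra; intros; apply L2_heat_payoff; lra).
  replace (t - t1 + t1) with t by ring.
  unfold gauss_quartic_mean. field. lra.
Qed.

End Duhamel.

Lemma is_RInt_cubic c1 c2 c3 b :
  is_RInt (fun u => c1 * u + c2 * u ^ 2 + c3 * u ^ 3) 0 b (c1 * b ^ 2 / 2 + c2 * b ^ 3 / 3 + c3 * b ^ 4 / 4).
Proof.
  set (P u := c1 * u ^ 2 / 2 + c2 * u ^ 3 / 3 + c3 * u ^ 4 / 4).
  change (is_RInt (fun u => c1 * u + c2 * u ^ 2 + c3 * u ^ 3) 0 b (P b)).
  replace (P b) with (minus (P b) (P 0)) by (change (P b - P 0 = P b); unfold P; field).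
  apply (is_RInt_derive P).
  - intros u _. unfold P. auto_derive; [auto|]. R_eq. field.
  - intros u _. apply continuous_of_ex_derive. auto_derive. auto.
Qed.

Section TimeIntegrals.

Variables (K rho k0 theta t : R).
Hypotheses (HK : 0 < K) (Ht : 0 < t).

Lemma F1_phi_form x s : 0 < s ->
  F1 rho k0 theta t K x s = phi t (x - ln K) s * duhamel1_rate K rho k0 theta t s (x - ln K) * t ^ 2 / 2.
Proof.
  intros Hs. set (c := phi t (x - ln K) s * duhamel1_rate K rho k0 theta t s (x - ln K)).
  unfold F1. apply (int_ab_eq_on_open _ (fun u => c * u + 0 * u ^ 2 + 0 * u ^ 3)); [lra| |].
  - intros u Hu. rewrite heat_L1_heat_payoff by (assumption || lra). unfold c. R_eq. ring.
  - replace (c * t ^ 2 / 2) with (c * t ^ 2 / 2 + 0 * t ^ 3 / 3 + 0 * t ^ 4 / 4) by field.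
    apply is_RInt_cubic.
Qed.

Lemma F2_phi_form x s : 0 < s ->
  F2 rho k0 theta t K x s
  = phi t (x - ln K) s
    * (K * s ^ 2 * t ^ 2 / 4 + K / 2 * ((x - ln K) ^ 2 / t ^ 2 - s ^ 2 / t - s ^ 4 / 4) * t ^ 3 / 3
       + t ^ 3 / 12 * (duhamel2_rate K rho k0 theta t (t / 2) s (x - ln K)
                       + duhamel2_rate K rho k0 theta t t s (x - ln K))).
Proof.
  intros Hs. set (X := x - ln K). set (ph := phi t X s).
  (* The inner integrand is linear in [t2]; the outer one is [t1^2/2] times the affine [R t1]. *)
  set (R t1 := duhamel2_rate K rho k0 theta t t1 s X).
  set (u := 2 * R (t / 2) - R t). set (v := 2 * (R t - R (t / 2)) / t).
  unfold F2. rewrite (int_ab_eq_on_open _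
      (fun t1 => ph * (K * s ^ 2 / 2) * t1 + ph * (K / 2 * (X ^ 2 / t ^ 2 - s ^ 2 / t - s ^ 4 / 4)) * t1 ^ 2
                 + 0 * t1 ^ 3) 0 t
      (ph * (K * s ^ 2 / 2) * t ^ 2 / 2 + ph * (K / 2 * (X ^ 2 / t ^ 2 - s ^ 2 / t - s ^ 4 / 4)) * t ^ 3 / 3
       + 0 * t ^ 4 / 4) (ltac:(lra))).
  2: { intros t1 H1. rewrite heat_L2_heat_payoff by (assumption || lra). fold X ph. R_eq. ring. }
  2: { apply is_RInt_cubic. }
  rewrite (int_ab_eq_on_open _ (fun t1 => 0 * t1 + ph * u / 2 * t1 ^ 2 + ph * v / 2 * t1 ^ 3) 0 t
             (0 * t ^ 2 / 2 + ph * u / 2 * t ^ 3 / 3 + ph * v / 2 * t ^ 4 / 4) (ltac:(lra))).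
  2: { intros t1 H1. apply (int_ab_eq_on_open _ (fun t2 => ph * R t1 * t2 + 0 * t2 ^ 2 + 0 * t2 ^ 3)); [lra| |].
       - intros t2 H2. rewrite heat_L1_heat_L1_heat_payoff by (assumption || lra). fold X ph (R t1). R_eq. ring.
       - replace (0 * t1 + ph * u / 2 * t1 ^ 2 + ph * v / 2 * t1 ^ 3)
           with (ph * R t1 * t1 ^ 2 / 2 + 0 * t1 ^ 3 / 3 + 0 * t1 ^ 4 / 4).
         + apply is_RInt_cubic.
         + unfold R. rewrite (duhamel2_rate_affine K rho k0 theta t s X Ht Hs t1) by lra.
           fold (R (t / 2)) (R t). unfold u, v. field. lra. }
  2: { apply is_RInt_cubic. }
  fold X ph (R (t / 2)) (R t). unfold u, v. R_eq. field. lra.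
Qed.

End TimeIntegrals.

Lemma exp_half_sq_mul_gauss z : exp (z ^ 2 / 2) * gauss z = 1.
Proof. unfold gauss. rewrite <- exp_plus, <- exp_0. f_equal. field. Qed.

Lemma neg1_pow_sq n : (-1) ^ n * (-1) ^ n = 1.
Proof. rewrite <- Rpow_mult_distr. replace (-1 * -1) with 1 by ring. apply pow1. Qed.

Lemma Hermite_S n P dP : (forall z, Hermite n z = P z) -> (forall z, is_derive P z (dP z)) ->
  forall z, Hermite (S n) z = z * P z - dP z.
Proof.
  intros HP HdP z.
  assert (Hn : forall w, nderiv n (fun w => exp (- (w ^ 2) / 2)) w = (-1) ^ n * P w * gauss w).
  { intros w. rewrite <- HP. unfold Hermite.
    transitivity ((-1) ^ n * (-1) ^ n * (exp (w ^ 2 / 2) * gauss w)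
                  * nderiv n (fun w => exp (- (w ^ 2) / 2)) w); [|ring].
    rewrite neg1_pow_sq, exp_half_sq_mul_gauss. ring. }
  unfold Hermite. cbn [nderiv]. rewrite (functional_extensionality _ _ Hn).
  rewrite (deriv1_is _ _ ((-1) ^ n * (dP z - z * P z) * gauss z)).
  - rewrite <- (tech_pow_Rmult (-1) n). transitivity ((-1) * ((-1) ^ n * (-1) ^ n) * (exp (z ^ 2 / 2) * gauss z) * (dP z - z * P z));
      [ring|]. rewrite neg1_pow_sq, exp_half_sq_mul_gauss. ring.
  - unfold gauss. auto_derive; [eexists; apply HdP|].
    replace (Derive (fun x => P x) z) with (dP z) by (symmetry; apply is_derive_unique, HdP).
    R_eq. unfold Rdiv. simpl. field.
Qed.

Lemma Hermite_0 z : Hermite 0 z = 1.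
Proof. unfold Hermite. cbn [nderiv]. rewrite pow_O, Rmult_1_l. apply exp_half_sq_mul_gauss. Qed.

Lemma Hermite_1 z : Hermite 1 z = z.
Proof.
  rewrite (Hermite_S 0 (fun _ => 1) (fun _ => 0)); [ring | apply Hermite_0 |].
  intros; auto_derive; auto.
Qed.

Lemma Hermite_2 z : Hermite 2 z = z ^ 2 - 1.
Proof.
  rewrite (Hermite_S 1 (fun z => z) (fun _ => 1)); [ring | apply Hermite_1 |].
  intros; auto_derive; auto.
Qed.

Lemma Hermite_3 z : Hermite 3 z = z ^ 3 - 3 * z.
Proof.
  rewrite (Hermite_S 2 (fun z => z ^ 2 - 1) (fun z => 2 * z)); [ring | apply Hermite_2 |].
  intros; auto_derive; auto; R_eq; ring.
Qed.

Lemma Hermite_4 z : Hermite 4 z = z ^ 4 - 6 * z ^ 2 + 3.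
Proof.
  rewrite (Hermite_S 3 (fun z => z ^ 3 - 3 * z) (fun z => 3 * z ^ 2 - 3)); [ring | apply Hermite_3 |].
  intros; auto_derive; auto; R_eq; ring.
Qed.

Theorem mainTheorem3 (K t rho k0 theta : R) (hK : 0 < K) (ht : 0 < t) :
  forall x s : R, 0 < s ->
    F1 rho k0 theta t K x s
      = K * t / 2 * (k0 * (theta - s) * sqrt t - rho * s * d_minus K t x s)
        * Nprime (d_minus K t x s)
    /\
    F2 rho k0 theta t K x s
      = K * sum_f_R0 (fun i => a2 rho k0 theta t s i * (- / (s * sqrt t)) ^ i
                               * Hermite i (d_minus K t x s)
                               * (Nprime (d_minus K t x s) / (s * sqrt t))) 4.
Proof.
  intros x s Hs. pose proof (sqrt_lt_R0 _ ht). split.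
  - rewrite F1_phi_form, Nprime_d_minus by assumption.
    unfold duhamel1_rate, d_minus. elim_sqrt t. field. lra.
  - rewrite F2_phi_form, Nprime_d_minus by assumption. cbn [sum_f_R0].
    rewrite Hermite_0, Hermite_1, Hermite_2, Hermite_3, Hermite_4.
    unfold a2, d_minus, duhamel2_rate, gauss_quartic_mean, L1_duhamel1_coef.
    elim_sqrt t. field. lra.
Qed.
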